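(* Let $\Delta>1$, let $\varepsilon=1/100$ and $\hat p=\Delta^{-3/4-5\varepsilon}$, and let $\delta,\nu\ge 0$. Let $G$ be a graph, $v$ a vertex of $G$, $L$ a finite set, and $p:V(G)\times L\to[0,\infty)$ a function such that for every $\gamma\in L$ either $p(v,\gamma)=0$ or $p(v,\gamma)\ge 1/\Delta$. Define $p_a(v,\gamma)=p(v,\gamma)$ if $p(v,\gamma)\le\hat p$ and $p_a(v,\gamma)=0$ otherwise, and $p_c(v,\gamma)=p_a(v,\gamma)$ if $\sum_{u\sim v}p(u,\gamma)\le 100\ln\Delta$ and $p_c(v,\gamma)=0$ otherwise. Suppose $$h(v,p):=-\sum_{\gamma\in L:\,p(v,\gamma)>0}p(v,\gamma)\ln p(v,\gamma)\ \ge\ (1-\delta)\ln\Delta\quad\text{and}\quad \sum_{\gamma\in L}p(v,\gamma)\in[1-\nu,1+\nu].$$ Then $\sum_{\gamma}p_a(v,\gamma)\ge 1-6(\delta+\nu)$. If in addition $\xi(v,p):=\sum_{u\sim v}\sum_{\gamma\in L}p(u,\gamma)p(v,\gamma)\le 2K$ for some $0<K\le\ln\Delta$, then $\sum_\gamma p_c(v,\gamma)\ge 1-6(\delta+\nu)-2\varepsilon$.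
   Context: $u\sim v$ means $u$ is adjacent to $v$ in $G$; $\ln$ is the natural logarithm. *)

From Stdlib Require Import Reals List.
Import ListNotations.
Open Scope R_scope.

Definition sumR {A : Type} (l : list A) (f : A -> R) : R :=
  fold_right (fun x acc => f x + acc) 0 l.

Definition eps : R := 1 / 100.

Definition phat (Delta : R) : R := Rpower Delta (- (3 / 4) - 5 * eps).

Definition p_a {V C : Type} (Delta : R) (p : V -> C -> R) (v : V) (g : C) : R :=
  if Rle_dec (p v g) (phat Delta) then p v g else 0.

Definition p_c {V C : Type} (Delta : R) (p : V -> C -> R) (nbrs : list V)
  (v : V) (g : C) : R :=
  if Rle_dec (sumR nbrs (fun u => p u g)) (100 * ln Delta)
  then p_a Delta p v g else 0.

Definition hent {V C : Type} (L : list C) (p : V -> C -> R) (v : V) : R :=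
  - sumR L (fun g => if Rlt_dec 0 (p v g) then p v g * ln (p v g) else 0).

Definition xi {V C : Type} (L : list C) (p : V -> C -> R) (nbrs : list V)
  (v : V) : R :=
  sumR nbrs (fun u => sumR L (fun g => p u g * p v g)).

(* Every nonzero p(v,γ) lies in [1/Δ, ∞), so its entropy contribution
   -p ln p is at most p ln Δ, and at most (4/5) p ln Δ when p exceeds p̂ = Δ^(-4/5).
   Hence h(v,p) <= ln Δ ((1/5) Σ p_a + (4/5) Σ p), and the entropy and mass hypotheses
   force Σ p_a >= 1 - 5δ - 4ν.  A colour γ with p_a(v,γ) > 0 is dropped by p_c only
   when Σ_{u~v} p(u,γ) > 100 ln Δ, so 100 ln Δ (Σ p_a - Σ p_c) <= ξ(v,p) <= 2K <= 2 ln Δ. *)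
From Stdlib Require Import Reals List Lra.
Open Scope R_scope.

Lemma sumR_add {A : Type} (l : list A) (f g : A -> R) :
  sumR l (fun x => f x + g x) = sumR l f + sumR l g.
Proof. induction l as [|a l IH]; simpl; [lra|]. rewrite IH. lra. Qed.

Lemma sumR_scal {A : Type} (l : list A) (c : R) (f : A -> R) :
  sumR l (fun x => c * f x) = c * sumR l f.
Proof. induction l as [|a l IH]; simpl; [lra|]. rewrite IH. lra. Qed.

Lemma sumR_opp {A : Type} (l : list A) (f : A -> R) :
  sumR l (fun x => - f x) = - sumR l f.
Proof. induction l as [|a l IH]; simpl; [lra|]. rewrite IH. lra. Qed.

Lemma sumR_le {A : Type} (l : list A) (f g : A -> R) :
  (forall x, In x l -> f x <= g x) -> sumR l f <= sumR l g.
Proof.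
  induction l as [|a l IH]; simpl; intros Hfg; [lra|].
  assert (f a <= g a) by (apply Hfg; auto).
  assert (sumR l f <= sumR l g) by (apply IH; auto).
  lra.
Qed.

Lemma sumR_ext {A : Type} (l : list A) (f g : A -> R) :
  (forall x, In x l -> f x = g x) -> sumR l f = sumR l g.
Proof.
  induction l as [|a l IH]; simpl; intros Hfg; [lra|].
  rewrite (Hfg a), IH; auto.
Qed.

Lemma sumR_nonneg {A : Type} (l : list A) (f : A -> R) :
  (forall x, 0 <= f x) -> 0 <= sumR l f.
Proof. intros Hf. induction l as [|a l IH]; simpl; [lra|]. specialize (Hf a). lra. Qed.

Lemma sumR_comm {A B : Type} (l1 : list A) (l2 : list B) (F : A -> B -> R) :
  sumR l1 (fun a => sumR l2 (F a)) = sumR l2 (fun b => sumR l1 (fun a => F a b)).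
Proof.
  induction l1 as [|a l1 IH]; simpl.
  - induction l2 as [|b l2 IH2]; simpl; lra.
  - rewrite IH, <- sumR_add. reflexivity.
Qed.

Lemma ln_le_compat (x y : R) : 0 < x -> x <= y -> ln x <= ln y.
Proof.
  intros Hx [Hxy | ->]; [|lra].
  left; apply ln_increasing; assumption.
Qed.

Lemma neg_xlnx_le (a x : R) : 0 < a -> a <= x -> - (x * ln x) <= x * - ln a.
Proof.
  intros Ha Hax.
  assert (ln a <= ln x) by (apply ln_le_compat; assumption).
  assert (x * ln a <= x * ln x) by (apply Rmult_le_compat_l; lra).
  lra.
Qed.

Lemma ln_phat (Delta : R) : ln (phat Delta) = - (4 / 5) * ln Delta.
Proof. unfold phat, eps. rewrite ln_Rpower. field. Qed.

Section ColourDistribution.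

Variables (V C : Type) (Delta : R) (p : V -> C -> R) (v : V).
Hypothesis hDelta : 1 < Delta.
Hypothesis p_nonneg : forall u g, 0 <= p u g.

Lemma p_a_bounds (g : C) : 0 <= p_a Delta p v g <= p v g.
Proof. unfold p_a. pose proof (p_nonneg v g). destruct Rle_dec; lra. Qed.

Lemma entropy_term_le (g : C) : p v g = 0 \/ p v g >= 1 / Delta ->
  - (if Rlt_dec 0 (p v g) then p v g * ln (p v g) else 0)
  <= ln Delta * (1 / 5 * p_a Delta p v g + 4 / 5 * p v g).
Proof.
  assert (Hinv : 0 < 1 / Delta) by (apply Rdiv_lt_0_compat; lra).
  unfold p_a; intros [Hzero | Hlarge].
  - rewrite Hzero. destruct (Rlt_dec 0 0); [lra|]. destruct Rle_dec; lra.
  - destruct (Rlt_dec 0 (p v g)) as [Hpos | ]; [|lra].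
    destruct Rle_dec as [Hsmall | Hbig].
    + pose proof (neg_xlnx_le (1 / Delta) (p v g) Hinv ltac:(lra)) as Hb.
      unfold Rdiv in Hb. rewrite Rmult_1_l, ln_Rinv in Hb by lra.
      lra.
    + pose proof (neg_xlnx_le (phat Delta) (p v g)
                    ltac:(unfold phat, Rpower; apply exp_pos) ltac:(lra)) as Hb.
      rewrite ln_phat in Hb.
      lra.
Qed.

Variable L : list C.
Hypothesis hp_v : forall g, In g L -> p v g = 0 \/ p v g >= 1 / Delta.

Lemma hent_le_mass :
  hent L p v <= ln Delta * (1 / 5 * sumR L (fun g => p_a Delta p v g)
                            + 4 / 5 * sumR L (fun g => p v g)).
Proof.
  unfold hent. rewrite <- sumR_opp, <- !sumR_scal, <- sumR_add, <- sumR_scal.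
  apply sumR_le. intros g Hg. apply entropy_term_le, hp_v, Hg.
Qed.

Lemma p_a_mass_ge (delta nu : R) :
  0 <= delta -> 0 <= nu ->
  hent L p v >= (1 - delta) * ln Delta ->
  sumR L (fun g => p v g) <= 1 + nu ->
  sumR L (fun g => p_a Delta p v g) >= 1 - 6 * (delta + nu).
Proof.
  intros Hdelta Hnu Hh Hmass.
  assert (Hln : 0 < ln Delta) by (rewrite <- ln_1; apply ln_increasing; lra).
  pose proof hent_le_mass as Hent.
  assert (Hscaled : ln Delta * (1 - delta) <= ln Delta *
            (1 / 5 * sumR L (fun g => p_a Delta p v g)
             + 4 / 5 * sumR L (fun g => p v g))) by lra.
  apply Rmult_le_reg_l in Hscaled; lra.
Qed.

End ColourDistribution.

Section Crowding.

Variables (V C : Type) (Delta : R) (p : V -> C -> R) (v : V) (nbrs : list V).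
Hypothesis p_nonneg : forall u g, 0 <= p u g.

Let load (g : C) : R := sumR nbrs (fun u => p u g).

Lemma xi_by_colour (L : list C) : xi L p nbrs v = sumR L (fun g => p v g * load g).
Proof.
  unfold xi, load. rewrite sumR_comm. apply sumR_ext. intros g _.
  rewrite <- sumR_scal. apply sumR_ext. intros u _. ring.
Qed.

Lemma p_c_loss_le (g : C) :
  100 * ln Delta * (p_a Delta p v g - p_c Delta p nbrs v g) <= p v g * load g.
Proof.
  assert (Hload : 0 <= load g) by (apply sumR_nonneg; intros; apply p_nonneg).
  pose proof (p_a_bounds V C Delta p v p_nonneg g).
  pose proof (p_nonneg v g).
  unfold p_c. fold (load g). destruct Rle_dec as [Hlight | Hheavy].
  - rewrite Rminus_diag, Rmult_0_r. apply Rmult_le_pos; lra.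
  - rewrite Rminus_0_r.
    assert (100 * ln Delta * p_a Delta p v g <= load g * p_a Delta p v g)
      by (apply Rmult_le_compat_r; lra).
    assert (load g * p_a Delta p v g <= load g * p v g)
      by (apply Rmult_le_compat_l; lra).
    lra.
Qed.

Lemma p_c_mass_loss_le_xi (L : list C) :
  100 * ln Delta * (sumR L (fun g => p_a Delta p v g)
                    - sumR L (fun g => p_c Delta p nbrs v g))
  <= xi L p nbrs v.
Proof.
  pose proof (sumR_le L _ _ (fun g _ => p_c_loss_le g)) as Hloss.
  rewrite sumR_scal in Hloss. unfold Rminus in *.
  rewrite sumR_add, sumR_opp in Hloss. rewrite xi_by_colour. exact Hloss.
Qed.

End Crowding.

Theorem mainTheorem8
  (V C : Type) (adj : V -> V -> Prop)
  (adj_sym : forall x y, adj x y -> adj y x)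
  (adj_irr : forall x, ~ adj x x)
  (v : V) (nbrs : list V) (nbrs_nodup : NoDup nbrs)
  (nbrs_spec : forall u, In u nbrs <-> adj v u)
  (L : list C) (L_nodup : NoDup L)
  (p : V -> C -> R) (p_nonneg : forall u g, 0 <= p u g)
  (Delta delta nu : R) (hDelta : 1 < Delta)
  (hdelta : 0 <= delta) (hnu : 0 <= nu)
  (hp_v : forall g, In g L -> p v g = 0 \/ p v g >= 1 / Delta)
  (hh : hent L p v >= (1 - delta) * ln Delta)
  (hsum1 : 1 - nu <= sumR L (fun g => p v g))
  (hsum2 : sumR L (fun g => p v g) <= 1 + nu) :
  sumR L (fun g => p_a Delta p v g) >= 1 - 6 * (delta + nu) /\
  (forall K : R, 0 < K -> K <= ln Delta -> xi L p nbrs v <= 2 * K ->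
     sumR L (fun g => p_c Delta p nbrs v g) >= 1 - 6 * (delta + nu) - 2 * eps).
Proof.
  pose proof (p_a_mass_ge V C Delta p v hDelta L hp_v delta nu
                hdelta hnu hh hsum2) as Hp_a.
  split; [exact Hp_a|].
  intros K HK HKln Hxi.
  assert (Hln : 0 < ln Delta) by (rewrite <- ln_1; apply ln_increasing; lra).
  pose proof (p_c_mass_loss_le_xi V C Delta p v nbrs p_nonneg L) as Hloss.
  assert (Hscaled : ln Delta * (100 * (sumR L (fun g => p_a Delta p v g)
                      - sumR L (fun g => p_c Delta p nbrs v g))) <= ln Delta * 2) by lra.
  apply Rmult_le_reg_l in Hscaled; [|exact Hln].
  unfold eps. lra.
Qed.
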